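(* Let $G,H$ be graphs such that $G$ is connected, has at least five vertices and has no vertices of degree two. Let $\mathcal D$ be a weak disk system in $G$, let $S$ be a subgraph of $H$ isomorphic to a subdivision of $G$, let $\mathcal D'$ be the weak disk system induced in $S$ by $\mathcal D$, and suppose $H$ has an $S$-triad (with respect to $\mathcal D'$). Then $H$ has a minor isomorphic to a 1-enlargement or a 3-enlargement of $G$, or to a weak 8-enlargement or a weak 9-enlargement of $G$ (all with respect to $\mathcal D$).
   Context: Graphs are finite and simple; paths and cycles have no repeated vertices. A segment is a maximal path whose internal vertices have degree exactly two; if $S$ is a subdivision of a graph $G$ without degree-two vertices, the segments of $S$ are the paths replacing edges of $G$ and the branch-vertices are the vertices corresponding to $V(G)$. A cycle double cover of $G$ is a set $\mathcal D$ of distinct cycles (disks) with each edge in exactly two disks; it is a weak disk system if any two distinct disks intersect in at most one vertex or in a segment. Two elements (vertices or edges) are confluent if some disk contains both. The weak disk system induced in a subdivision $S$ of $G$ is obtained by replacing each edge of each disk by its segment. An $S$-triad in $H$ consists of a vertex $x\in V(H)-V(S)$ and three paths $L_1,L_2,L_3$ with common end $x$, having no internal vertices in common with each other or with $S$, where $L_i$ ends at $x_i\in V(S)$, and $x_1,x_2,x_3$ are distinct vertices that are pairwise confluent but not all three contained in one disk of $\mathcal D'$. Splitting: for a vertex $v$ of degree $\ge4$ and a partition $(N_1,N_2)$ of its neighbours with $|N_1|,|N_2|\ge2$, replace $v$ by adjacent new vertices $v_1,v_2$ with $v_i$ adjacent to $N_i$. The split is conforming (w.r.t. $\mathcal D$)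 if (S1) among the disks containing $v$ exactly two, $D_1,D_2$, have their two neighbours of $v$ one in $N_1$ and one in $N_2$, and (S2) $D_1\cap D_2=\{v\}$; otherwise non-conforming. A 1-enlargement of $G$ is obtained by adding an edge between two non-confluent vertices. A 3-enlargement is obtained by a non-conforming split of a vertex. A weak 8-enlargement is obtained by adding a new vertex adjacent to three vertices $x_1,x_2,x_3$ of $G$ not all contained in one disk. A weak 9-enlargement is obtained, for an edge $xy$ and a vertex $u$ such that no disk contains both $u$ and the edge $xy$, by subdividing $xy$ with a new vertex and joining it to $u$. *)

From mathcomp Require Import all_boot.
Set Implicit Arguments. Unset Strict Implicit. Unset Printing Implicit Defensive.

Section Graphs.
Variable T : finType.

Definition sgraph (e : rel T) := symmetric e /\ irreflexive e.

Definition deg (e : rel T) (v : T) : nat := #|[set u | e v u]|.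

Definition restr (B : {set T}) (e : rel T) : rel T :=
  fun a b => [&& a \in B, b \in B & e a b].

(* edges of G are represented as two-element vertex sets [set u; v] *)
Definition cycle_edges (s : seq T) : {set {set T}} :=
  [set [set x; next s x] | x in s].

Definition is_cycle (e : rel T) (C : {set {set T}}) : Prop :=
  exists s : seq T, [/\ uniq s, 2 < size s, cycle e s & C = cycle_edges s].

Definition cverts (C : {set {set T}}) : {set T} := \bigcup_(f in C) f.

Definition cdc (e : rel T) (D : {set {set {set T}}}) : Prop :=
  (forall C, C \in D -> is_cycle e C) /\
  (forall u v, e u v -> #|[set C in D | [set u; v] \in C]| = 2).

(* weak disk system.  Segments of a graph without degree-two vertices are
   exactly its single edges, so "intersect in a segment" means: the common
   subgraph is one edge uv together with its ends. *)
Definition weak_disk_system (e : rel T) (D : {set {set {set T}}}) : Prop :=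
  cdc e D /\
  (forall C1 C2, C1 \in D -> C2 \in D -> C1 != C2 ->
     #|cverts C1 :&: cverts C2| <= 1 \/
     exists u v, e u v /\ cverts C1 :&: cverts C2 = [set u; v] /\
                 C1 :&: C2 = [set [set u; v]]).

Definition confluent (D : {set {set {set T}}}) (a b : T) : bool :=
  [exists C in D, (a \in cverts C) && (b \in cverts C)].

(* 1-enlargement: add edge ab *)
Definition add_edge (e : rel T) (a b : T) : rel T :=
  fun x y => [|| e x y, (x == a) && (y == b) | (x == b) && (y == a)].

(* splitting of v: Some v plays v1 (adjacent to N1), None plays v2
   (adjacent to N2 = N(v) \ N1), v1 v2 adjacent *)
Definition split_rel (e : rel T) (v : T) (N1 : {set T}) : rel (option T) :=
  fun p q =>
    match p, q with
    | Some x, Some y =>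
        if x == v then (y \in N1) && e v y
        else if y == v then (x \in N1) && e v x
        else e x y
    | Some x, None => (x == v) || (e v x && (x \notin N1))
    | None, Some y => (y == v) || (e v y && (y \notin N1))
    | None, None => false
    end.

Definition splits (e : rel T) (v : T) (N1 : {set T}) (C : {set {set T}}) :=
  [exists u, ([set v; u] \in C) && (u \in N1)] &&
  [exists u, [&& [set v; u] \in C, e v u & u \notin N1]].

Definition conforming (e : rel T) (D : {set {set {set T}}}) (v : T)
    (N1 : {set T}) : Prop :=
  exists D1 D2, D1 != D2 /\
    [set C in D | (v \in cverts C) && splits e v N1 C] = [set D1; D2] /\
    cverts D1 :&: cverts D2 = [set v].

(* weak 8-enlargement: new vertex None adjacent to x1 x2 x3 *)
Definition rel8 (e : rel T) (x1 x2 x3 : T) : rel (option T) :=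
  fun p q =>
    match p, q with
    | Some a, Some b => e a b
    | Some a, None => a \in [:: x1; x2; x3]
    | None, Some b => b \in [:: x1; x2; x3]
    | None, None => false
    end.

(* weak 9-enlargement: subdivide xy by new vertex None, join it to u *)
Definition rel9 (e : rel T) (x y u : T) : rel (option T) :=
  fun p q =>
    match p, q with
    | Some a, Some b => e a b && ([set a; b] != [set x; y])
    | Some a, None => a \in [:: x; y; u]
    | None, Some b => b \in [:: x; y; u]
    | None, None => false
    end.
End Graphs.

Definition minor_model (TK TH : finType) (eK : rel TK) (eH : rel TH)
    (beta : TK -> {set TH}) : Prop :=
  [/\ forall k, beta k != set0,
      forall k k', k != k' -> [disjoint beta k & beta k'],
      forall k, {in beta k &, forall x y, connect (restr (beta k) eH) x y} &
      forall k k', eK k k' ->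
        exists x y, [/\ x \in beta k, y \in beta k' & eH x y]].

Definition has_minor (TH TK : finType) (eH : rel TH) (eK : rel TK) : Prop :=
  exists beta : TK -> {set TH}, minor_model eK eH beta.

Section Subdivision.
Variables (TG TH : finType) (eG : rel TG) (eH : rel TH).

(* S = union of the branch vertices phi u and the H-paths
   phi u, Q u v, phi v replacing each edge uv of G: S is a subgraph of H
   isomorphic to a subdivision of G. *)
Definition subdiv_model (phi : TG -> TH) (Q : TG -> TG -> seq TH) : Prop :=
  [/\ injective phi,
      forall u v, eG u v ->
        path eH (phi u) (rcons (Q u v) (phi v)) &&
        uniq (phi u :: rcons (Q u v) (phi v)),
      forall u v, eG u v -> Q v u = rev (Q u v),
      forall u v x, eG u v -> x \in Q u v -> x \notin codom phi &
      forall u v u' v' x, eG u v -> eG u' v' -> [set u; v] != [set u'; v'] ->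
        x \in Q u v -> x \notin Q u' v'].

Variables (phi : TG -> TH) (Q : TG -> TG -> seq TH).

Definition Svert (x : TH) : bool :=
  (x \in codom phi) || [exists u, exists v, eG u v && (x \in Q u v)].

Definition segverts (u v : TG) : {set TH} :=
  phi u |: (phi v |: [set x | x \in Q u v]).

(* x lies on the disk of D' induced by disk C of D *)
Definition in_disk' (C : {set {set TG}}) (x : TH) : bool :=
  [exists u, exists v, ([set u; v] \in C) && (x \in segverts u v)].

Definition confluent' (D : {set {set {set TG}}}) (x y : TH) : bool :=
  [exists C in D, in_disk' C x && in_disk' C y].

(* S-triad: centre x, paths L_i = x :: R_i ++ [x_i] *)
Definition S_triad (D : {set {set {set TG}}}) (x x1 x2 x3 : TH)
    (R1 R2 R3 : seq TH) : Prop :=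
  ~~ Svert x /\
  [&& Svert x1, Svert x2 & Svert x3] /\
  uniq [:: x1; x2; x3] /\
  (path eH x (rcons R1 x1) && uniq (x :: rcons R1 x1)) /\
  (path eH x (rcons R2 x2) && uniq (x :: rcons R2 x2)) /\
  (path eH x (rcons R3 x3) && uniq (x :: rcons R3 x3)) /\
  (forall y, y \in R1 ++ R2 ++ R3 -> ~~ Svert y) /\
  uniq (R1 ++ R2 ++ R3) /\
  [&& confluent' D x1 x2, confluent' D x1 x3 & confluent' D x2 x3] /\
  ~~ [exists C in D, [&& in_disk' C x1, in_disk' C x2 & in_disk' C x3]].

Definition has_S_triad (D : {set {set {set TG}}}) : Prop :=
  exists x x1 x2 x3 R1 R2 R3, S_triad D x x1 x2 x3 R1 R2 R3.
End Subdivision.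

(* Each end x_i of the triad lies on S at a branch vertex or inside a segment;
   pick for each a vertex c_i of G among the ends of that site, the c_i
   distinct.  Contract every segment onto its two ends, cutting it so that x_i
   falls into the branch set of c_i, and contract the three paths of the triad
   onto its centre: this is a weak 8-enlargement at c_1, c_2, c_3.  It is a
   genuine one unless the chosen ends always share a disk.  In that case the
   disks witnessing the pairwise confluence of x_1, x_2, x_3, together with
   those through the chosen ends, contain three of the four triangles of a K4
   on some vertices q_1..q_4 of G.  As G is connected with at least
   five vertices, some q_i has a neighbour outside; splitting q_i between two of
   its q-neighbours and the rest violates (S2), and this split is a minor of the
   8-enlargement at q_i and those two neighbours. *)

From mathcomp Require Import all_boot.
From mathcomp Require Import zify.
Set Implicit Arguments. Unset Strict Implicit. Unset Printing Implicit Defensive.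

Section Connectivity.
Variable T : finType.
Implicit Types (e : rel T) (B : {set T}).

Lemma restr_sym e B : symmetric e -> symmetric (restr B e).
Proof. by move=> se a b; rewrite /restr se andbCA. Qed.

Lemma path_connect_restr e B x s : path e x s -> x \in B -> all (mem B) s ->
  forall y, y \in x :: s -> connect (restr B e) x y.
Proof.
elim: s x => [|z s IH] x /=; first by move=> _ _ _ y; rewrite inE => /eqP ->.
move=> /andP[exz ps] xB /andP[zB sB] y; rewrite inE => /orP[/eqP->//|ys].
by apply: connect_trans (connect1 _) (IH z ps zB sB y ys); rewrite /restr xB zB.
Qed.

Lemma connect_restr_from e B r : symmetric e -> r \in B ->
  (forall y, y \in B -> connect (restr B e) r y) ->
  {in B &, forall x y, connect (restr B e) x y}.
Proof.
move=> se rB rB_conn x y xB yB; apply: connect_trans (rB_conn y yB).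
by rewrite (sym_connect_sym (restr_sym B se)) rB_conn.
Qed.

Lemma connect_exit_edge e x y (A : {pred T}) :
  connect e x y -> x \in A -> y \notin A -> exists u v, [/\ u \in A, v \notin A & e u v].
Proof.
move=> /connectP[p pp ->] {y}; elim: p x pp => [|z p IH] x /=; first by move=> _ ->.
move=> /andP[exz pp] xA lA; case: (boolP (z \in A)) => zA; first exact: IH zA lA.
by exists x, z.
Qed.

Lemma exit_edge e (s : seq T) x : (forall x y, connect e x y) -> x \in s ->
  size s < #|T| -> exists u v, [/\ u \in s, v \notin s & e u v].
Proof.
move=> conn xs small; have : ~~ ([set: T] \subset [set z in s]).
  apply: contraTN small => /subset_leq_card; rewrite cardsT cardsE -leqNgt => le.
  exact: leq_trans le (card_size s).
by case/subsetPn => z _; rewrite inE; apply: connect_exit_edge (conn x z) xs.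
Qed.

End Connectivity.

Lemma eq_set2 (T : finType) (u v a b : T) : [set u; v] = [set a; b] ->
  (u = a /\ v = b) \/ (u = b /\ v = a).
Proof.
move=> E; have ua : u \in [set a; b] by rewrite -E set21.
have vb : v \in [set a; b] by rewrite -E set22.
have au : a \in [set u; v] by rewrite E set21.
have bu : b \in [set u; v] by rewrite E set22.
by move: ua vb au bu => /set2P[]-> /set2P[]-> /set2P[] ? /set2P[] ?; subst; auto.
Qed.

Lemma index_rev (T : eqType) (s : seq T) h : uniq s -> h \in s ->
  index h (rev s) = size s - (index h s).+1.
Proof.
move=> us hs; set i := index h s.
have ilt : i < size s by rewrite index_mem.
have -> : h = nth h (rev s) (size s - i.+1).
  rewrite nth_rev; last by lia.
  have -> : size s - (size s - i.+1).+1 = i by lia.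
  by rewrite nth_index.
by rewrite index_uniq ?rev_uniq // size_rev; lia.
Qed.

Lemma minor_model_relabel (TK TK' TH : finType) (eK : rel TK) (eK' : rel TK')
    (eH : rel TH) (beta : TK -> {set TH}) (f : TK' -> TK) :
  injective f -> (forall k k', eK' k k' -> eK (f k) (f k')) ->
  minor_model eK eH beta -> minor_model eK' eH (beta \o f).
Proof.
move=> f_inj f_edge [ne disj conn edge]; split => //=.
- by move=> k k' kk'; apply: disj; apply: contra kk' => /eqP /f_inj ->.
- by move=> k k' /f_edge /edge.
Qed.

Lemma has_minor_rel8_perm (TG TH : finType) (eG : rel TG) (eH : rel TH) a b c a' b' c' :
  [:: a; b; c] =i [:: a'; b'; c'] ->
  has_minor eH (rel8 eG a b c) -> has_minor eH (rel8 eG a' b' c').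
Proof.
move=> E [beta M]; exists (beta \o id).
by apply: (minor_model_relabel (f := id)) M => // [[u|] [v|]] //=; rewrite E.
Qed.

(* The apex of the 8-enlargement plays the half of [y] keeping [c2] and [c3],
   and [y] itself plays the other half. *)
Lemma has_minor_split_of_rel8 (TG TH : finType) (eG : rel TG) (eH : rel TH) y c2 c3 :
  symmetric eG -> uniq [:: y; c2; c3] ->
  has_minor eH (rel8 eG y c2 c3) -> has_minor eH (split_rel eG y [set c2; c3]).
Proof.
move=> seG U [beta M].
pose f (o : option TG) := match o with
  | Some u => if u == y then None else Some u | None => Some y end.
exists (beta \o f); apply: (minor_model_relabel (f := f)) M.
  by case=> [u|] [v|] /=; do ?case: eqP => //=; congruence.
have [yn2 yn3] : c2 != y /\ c3 != y.
  by move: U; rewrite /= !inE !negb_or !(eq_sym y) => /andP[/andP[-> ->]].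
case=> [a|] [b|] //=.
- case: (eqVneq a y) => [?|ay]; first subst a.
    move=> /andP[]; rewrite !inE => /orP[]/eqP-> _.
      by rewrite (negbTE yn2) /= !inE eqxx !orbT.
    by rewrite (negbTE yn3) /= !inE eqxx !orbT.
  case: (eqVneq b y) => [?|by_]; first subst b.
    by move=> /andP[]; rewrite !inE => /orP[]/eqP-> _ /=; rewrite !inE eqxx !orbT.
  by move=> eab /=.
- case: (eqVneq a y) => [?|ay] /=; first (subst a); first by rewrite !inE eqxx.
  by rewrite /= => /andP[eya _]; rewrite seG.
- case: (eqVneq b y) => [?|by_] /=; first (subst b); first by rewrite !inE eqxx.
  by move=> /andP[].
Qed.

(** * Branch sets in a subdivision *)

Section BranchSets.
Variables (TG TH : finType) (eG : rel TG) (eH : rel TH).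
Variables (phi : TG -> TH) (Q : TG -> TG -> seq TH).
Hypothesis sm : subdiv_model eG eH phi Q.
Hypothesis seG : symmetric eG.
Hypothesis seH : symmetric eH.

Lemma seg_path u v : eG u v -> path eH (phi u) (rcons (Q u v) (phi v)).
Proof. by case: sm => _ h _ _ _ /h /andP[]. Qed.

Lemma seg_uniq u v : eG u v -> uniq (Q u v).
Proof.
by case: sm => _ h _ _ _ /h /andP[_] /= /andP[_]; rewrite rcons_uniq => /andP[].
Qed.

Lemma seg_rev u v : eG u v -> Q v u = rev (Q u v).
Proof. by case: sm => _ _ h _ _ /h. Qed.

Lemma seg_phiF u v w : eG u v -> phi w \in Q u v -> False.
Proof. by case: sm => _ _ _ h _ euv /(h _ _ _ euv); rewrite codom_f. Qed.

Lemma seg_inj u v u' v' h : eG u v -> eG u' v' -> h \in Q u v -> h \in Q u' v' ->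
  [set u; v] = [set u'; v'].
Proof.
case: sm => _ _ _ _ disj e e' hQ hQ'; apply/eqP; apply: contraT => ne.
by move: (disj _ _ _ _ _ e e' ne hQ); rewrite hQ'.
Qed.

Lemma phi_inj : injective phi.
Proof. by case: sm. Qed.

(* [cut u v] inner vertices of the segment uv, counted from [phi u], go to the
   branch set of [u], and the remaining [cut v u] ones to that of [v]. *)
Variable cut : TG -> TG -> nat.
Hypothesis cutD : forall u v, eG u v -> cut u v + cut v u = size (Q u v).

Definition branch_set u : {set TH} :=
  phi u |: [set h | [exists v, eG u v && (h \in take (cut u v) (Q u v))]].

Lemma branch_setP u h :
  reflect (h = phi u \/ exists2 v, eG u v & h \in take (cut u v) (Q u v))
          (h \in branch_set u).
Proof.
apply: (iffP setU1P) => [[->|]|[->|[v ev hv]]]; [by left| |by left|].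
  by rewrite inE => /existsP[v /andP[ev hv]]; right; exists v.
by right; rewrite inE; apply/existsP; exists v; rewrite ev.
Qed.

Lemma phi_branch_set u : phi u \in branch_set u.
Proof. exact: setU11. Qed.

Lemma branch_set_Svert u h : h \in branch_set u -> Svert eG phi Q h.
Proof.
case/branch_setP=> [->|[v ev hv]]; rewrite /Svert ?codom_f //.
apply/orP; right; apply/existsP; exists u; apply/existsP; exists v.
by rewrite ev (mem_take hv).
Qed.

Lemma branch_set_disjoint u u' : u != u' -> [disjoint branch_set u & branch_set u'].
Proof.
move=> nu; rewrite -setI_eq0; apply/eqP/setP => h; rewrite inE in_set0.
apply/negbTE/negP => /andP[/branch_setP h1 /branch_setP h2].
case: h1 h2 => [->|[v ev hv]] [e2|[v' ev' hv']].
- by move/phi_inj: e2 => e2; rewrite e2 eqxx in nu.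
- exact: (seg_phiF ev' (mem_take hv')).
- by rewrite e2 in hv; exact: (seg_phiF ev (mem_take hv)).
have hQ := mem_take hv; have hQ' := mem_take hv'.
case/eq_set2: (seg_inj ev ev' hQ hQ') => [[e1 _]|[e1 e2]]; first by rewrite e1 eqxx in nu.
subst u' v'; have := cutD ev; have := hQ; rewrite -index_mem.
move: hv hv'; rewrite (seg_rev ev) !in_take ?mem_rev // index_rev ?(seg_uniq ev) //.
by move: (index h (Q u v)) (cut u v) (cut v u) (size (Q u v)) => i a b s; lia.
Qed.

Lemma branch_set_connected u :
  {in branch_set u &, forall x y, connect (restr (branch_set u) eH) x y}.
Proof.
apply: (connect_restr_from seH (phi_branch_set u)) => y /branch_setP[->|[v ev hv]].
  exact: connect0.
have pt : path eH (phi u) (take (cut u v) (Q u v)).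
  by apply: take_path; move: (seg_path ev); rewrite rcons_path => /andP[].
apply: (path_connect_restr pt (phi_branch_set u)); last by rewrite inE hv orbT.
by apply/allP => z zt; apply/branch_setP; right; exists v.
Qed.

Lemma branch_set_edge u v : eG u v ->
  exists x y, [/\ x \in branch_set u, y \in branch_set v & eH x y].
Proof.
move=> ev; set k := cut u v.
have kle : k <= size (Q u v) by have := cutD ev; rewrite /k; lia.
have P := seg_path ev.
rewrite -(cat_take_drop k (Q u v)) -cats1 -catA cat_path in P.
case/andP: P => _ P.
have lastB : last (phi u) (take k (Q u v)) \in branch_set u.
  have := mem_last (phi u) (take k (Q u v)); rewrite inE => /orP[/eqP->|hm].
    exact: phi_branch_set.
  by apply/branch_setP; right; exists v.
exists (last (phi u) (take k (Q u v))).
case E: (drop k (Q u v)) P => [|y r] /=; rewrite ?andbT => P.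
  by exists (phi v); split => //; exact: phi_branch_set.
case/andP: P => P _; exists y; split => //.
have ks : k < size (Q u v).
  by rewrite ltnNge; apply/negP => hk; move: E; rewrite drop_oversize.
have yE : y = nth y (Q u v) k by move: E; rewrite (drop_nth y ks) => -[].
have yQ : y \in Q u v by rewrite yE mem_nth.
apply/branch_setP; right; exists u; first by rewrite seG.
rewrite (seg_rev ev) in_take ?mem_rev // index_rev ?(seg_uniq ev) // yE.
rewrite index_uniq ?(seg_uniq ev) //.
by have := cutD ev; rewrite -/k; move: (cut v u) (size (Q u v)) ks => a b; lia.
Qed.

End BranchSets.

Section AnchorCut.
Variables (TG TH : finType) (eG : rel TG) (eH : rel TH).
Variables (phi : TG -> TH) (Q : TG -> TG -> seq TH).
Hypothesis sm : subdiv_model eG eH phi Q.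
Hypothesis irG : irreflexive eG.

Definition in_star (c : TG) (h : TH) := h = phi c \/ exists2 d, eG c d & h \in Q c d.

(* An anchor [(h, c)] asks for [h] to end up in the branch set of [c]. *)
Variable X : seq (TH * TG).
Hypothesis anchor_star : forall p, p \in X -> in_star p.2 p.1.
Hypothesis anchor_sep : forall p q, p \in X -> q \in X -> p != q -> forall d d',
  eG p.2 d -> eG q.2 d' -> p.1 \in Q p.2 d -> q.1 \in Q q.2 d' ->
  [set p.2; d] != [set q.2; d'].

Definition anchors_on u v :=
  [seq p <- X | (p.1 \in Q u v) && ((p.2 == u) || (p.2 == v))].

(* Without an anchor, the whole segment goes to the end of smaller rank. *)
Definition anchor_cut u v : nat :=
  match anchors_on u v with
  | p :: _ => if p.2 == u then (index p.1 (Q u v)).+1 else index p.1 (Q u v)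
  | [::] => if enum_rank u < enum_rank v then size (Q u v) else 0
  end.

Lemma anchors_onC u v : eG u v -> anchors_on v u = anchors_on u v.
Proof. by move=> ev; apply: eq_filter => p; rewrite (seg_rev sm ev) mem_rev orbC. Qed.

Lemma anchor_cutD u v : eG u v -> anchor_cut u v + anchor_cut v u = size (Q u v).
Proof.
move=> ev; have nuv : u != v by apply: contraTneq ev => ->; rewrite irG.
rewrite /anchor_cut (anchors_onC ev).
case E: (anchors_on u v) => [|p r].
  rewrite (seg_rev sm ev) size_rev.
  have : enum_rank u != enum_rank v by apply: contra nuv => /eqP/enum_rank_inj->.
  case: ltngtP => [_ _|_ _|/val_inj->]; by rewrite ?addn0 ?add0n ?eqxx.
have : p \in anchors_on u v by rewrite E inE eqxx.
rewrite mem_filter => /andP[/andP[pQ pe] _].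
have := pQ; rewrite -index_mem => ilt.
rewrite (seg_rev sm ev) index_rev ?(seg_uniq sm ev) //.
case: eqP pe => [->|_] /=.
  by rewrite (negbTE nuv) => _; move: (index _ _) (size _) ilt => a b; lia.
by move=> ->; move: (index _ _) (size _) ilt => a b; lia.
Qed.

Lemma anchor_in_branch_set p : p \in X -> p.1 \in branch_set eG phi Q anchor_cut p.2.
Proof.
move=> pX; case: (anchor_star pX) => [->|[d ed hd]]; first exact: phi_branch_set.
apply/branch_setP; right; exists d => //.
have only_p : forall q, q \in anchors_on p.2 d -> q = p.
  move=> q; rewrite mem_filter => /andP[/andP[qQ qe] qX].
  apply/eqP; apply: contraT => nqp.
  case: (anchor_star qX) => [qE|[d' ed' hd']].
    by rewrite qE in qQ; case: (seg_phiF sm ed qQ).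
  by move: (anchor_sep qX pX nqp ed' ed hd' hd); rewrite (seg_inj sm ed' ed hd' qQ) eqxx.
rewrite /anchor_cut; case E: (anchors_on p.2 d) => [|q r].
  have : p \in anchors_on p.2 d by rewrite mem_filter hd eqxx pX.
  by rewrite E.
have -> : q = p by apply: only_p; rewrite E inE eqxx.
by rewrite eqxx in_take // ltnSn.
Qed.

End AnchorCut.

Section TriadMinor.
Variables (TG TH : finType) (eG : rel TG) (eH : rel TH).
Variables (phi : TG -> TH) (Q : TG -> TG -> seq TH).
Hypothesis sm : subdiv_model eG eH phi Q.
Hypothesis seG : symmetric eG.
Hypothesis irG : irreflexive eG.
Hypothesis seH : symmetric eH.
Variables (x x1 x2 x3 : TH) (R1 R2 R3 : seq TH) (c1 c2 c3 : TG).
Hypothesis x_notin_S : ~~ Svert eG phi Q x.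
Hypothesis R_notin_S : forall y, y \in R1 ++ R2 ++ R3 -> ~~ Svert eG phi Q y.
Hypothesis path1 : path eH x (rcons R1 x1).
Hypothesis path2 : path eH x (rcons R2 x2).
Hypothesis path3 : path eH x (rcons R3 x3).
Let X := [:: (x1, c1); (x2, c2); (x3, c3)].
Hypothesis anchor_star : forall p, p \in X -> in_star eG phi Q p.2 p.1.
Hypothesis anchor_sep : forall p q, p \in X -> q \in X -> p != q -> forall d d',
  eG p.2 d -> eG q.2 d' -> p.1 \in Q p.2 d -> q.1 \in Q q.2 d' ->
  [set p.2; d] != [set q.2; d'].

Let cut := anchor_cut Q X.
Let cutD : forall u v, eG u v -> cut u v + cut v u = size (Q u v).
Proof. exact: anchor_cutD sm irG X. Qed.

Let centre : {set TH} := x |: [set h | h \in R1 ++ R2 ++ R3].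

Definition triad_branch_set (o : option TG) : {set TH} :=
  if o is Some u then branch_set eG phi Q cut u else centre.

Let centre_R (R : seq TH) : {subset R <= R1 ++ R2 ++ R3} -> all (mem centre) R.
Proof. by move=> sub; apply/allP => y yR; rewrite !inE (sub _ yR) orbT. Qed.

Let centre_edge (R : seq TH) xi ci : path eH x (rcons R xi) ->
  {subset R <= R1 ++ R2 ++ R3} -> (xi, ci) \in X ->
  exists a b, [/\ a \in centre, b \in branch_set eG phi Q cut ci & eH a b].
Proof.
move=> pR sub pX; exists (last x R), xi; split.
- have := mem_last x R; rewrite inE => /orP[/eqP->|]; first exact: setU11.
  by move/allP: (centre_R sub); apply.
- exact: (anchor_in_branch_set sm anchor_star anchor_sep pX).
- by move: pR; rewrite rcons_path => /andP[].
Qed.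

Let centre_connected (R : seq TH) xi : path eH x (rcons R xi) ->
  {subset R <= R1 ++ R2 ++ R3} -> forall y, y \in R -> connect (restr centre eH) x y.
Proof.
move=> pR sub y yR; apply: (path_connect_restr (s := R)) (centre_R sub) _ _.
- by move: pR; rewrite rcons_path => /andP[].
- exact: setU11.
- by rewrite inE yR orbT.
Qed.

Lemma triad_minor_model : minor_model (rel8 eG c1 c2 c3) eH triad_branch_set.
Proof.
have s1 : {subset R1 <= R1 ++ R2 ++ R3} by move=> y; rewrite !mem_cat => ->.
have s2 : {subset R2 <= R1 ++ R2 ++ R3} by move=> y; rewrite !mem_cat => ->; rewrite orbT.
have s3 : {subset R3 <= R1 ++ R2 ++ R3} by move=> y; rewrite !mem_cat => ->; rewrite !orbT.
have centre_S : forall h, h \in centre -> ~~ Svert eG phi Q h.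
  by move=> h; rewrite !inE => /orP[/eqP->|]; [exact: x_notin_S | apply: R_notin_S].
have centre_disj u : [disjoint centre & branch_set eG phi Q cut u].
  rewrite -setI_eq0; apply/eqP/setP => h; rewrite inE in_set0.
  by apply/negbTE/negP => /andP[/centre_S + /branch_set_Svert hS]; rewrite hS.
split.
- case=> [u|] /=; apply/set0Pn; first by exists (phi u); exact: phi_branch_set.
  by exists x; exact: setU11.
- case=> [u|] [u'|] //= ne; rewrite 1?disjoint_sym //.
  by apply: (branch_set_disjoint sm cutD); apply: contraNneq ne => ->.
- case=> [u|] /=; first exact: (branch_set_connected sm seH).
  apply: (connect_restr_from seH (setU11 x _)) => y.
  rewrite !inE => /orP[/eqP->|]; first exact: connect0.
  rewrite !mem_cat => /or3P[yR|yR|yR];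
    [exact: centre_connected path1 s1 y yR | exact: centre_connected path2 s2 y yR |
     exact: centre_connected path3 s3 y yR].
- have X2 : (x2, c2) \in X by rewrite !inE eqxx orbT.
  have X3 : (x3, c3) \in X by rewrite !inE eqxx !orbT.
  have T1 := centre_edge path1 s1 (mem_head _ _).
  have T2 := centre_edge path2 s2 X2; have T3 := centre_edge path3 s3 X3.
  case=> [u|] [u'|] //=.
  + exact: (branch_set_edge sm seG cutD).
  + rewrite !inE => /or3P[]/eqP->; [case: T1|case: T2|case: T3] => a [b [aN bB ab]];
      by exists b, a; rewrite seH.
  + by rewrite !inE => /or3P[]/eqP->; [case: T1|case: T2|case: T3] => a [b [aN bB ab]];
      exists a, b.
Qed.

End TriadMinor.

(** * Weak disk systems *)

Section WeakDiskSystem.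
Variables (TG : finType) (eG : rel TG) (D : {set {set {set TG}}}).
Implicit Types (X Y : {set {set TG}}).
Hypothesis seG : symmetric eG.
Hypothesis wd : weak_disk_system eG D.

Lemma disk_cycle X : X \in D -> is_cycle eG X.
Proof. by case: wd => [[h _] _] /h. Qed.

Lemma disk_edgeP X f : X \in D -> f \in X -> exists a b, f = [set a; b] /\ eG a b.
Proof.
move=> /disk_cycle [s [_ _ cs ->]] /imsetP[x xs ->].
by exists x, (next s x); split => //; exact: next_cycle.
Qed.

Lemma cverts_edgel X u v : [set u; v] \in X -> u \in cverts X.
Proof. by move=> uvX; apply/bigcupP; exists [set u; v]; rewrite ?set21. Qed.

Lemma cverts_edger X u v : [set u; v] \in X -> v \in cverts X.
Proof. by move=> uvX; apply/bigcupP; exists [set u; v]; rewrite ?set22. Qed.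

Lemma disk_edge_rel X u v : X \in D -> [set u; v] \in X -> eG u v.
Proof.
move=> XD uvX; have [a [b [E eab]]] := disk_edgeP XD uvX.
by case/eq_set2: E => [[-> ->]|[-> ->]] //; rewrite seG.
Qed.

Lemma cverts_disk_edge X u : X \in D -> u \in cverts X ->
  exists v, eG u v /\ [set u; v] \in X.
Proof.
move=> XD /bigcupP[f fX uf]; have [a [b [fE _]]] := disk_edgeP XD fX.
move: uf; rewrite fE => /set2P[] uE; subst u.
  by exists b; rewrite -fE (disk_edge_rel XD) -?fE.
by exists a; rewrite setUC -fE (disk_edge_rel XD) // setUC -fE.
Qed.

Lemma disks_share_edge X Y u v : X \in D -> Y \in D -> X != Y -> u != v ->
  u \in cverts X -> v \in cverts X -> u \in cverts Y -> v \in cverts Y ->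
  [/\ [set u; v] \in X, [set u; v] \in Y &
      forall w, w \in cverts X -> w \in cverts Y -> w = u \/ w = v].
Proof.
move=> XD YD nXY nuv uX vX uY vY.
case: wd => _ /(_ X Y XD YD nXY) [small|[a [b [_ [E1 E2]]]]].
  have : [set u; v] \subset cverts X :&: cverts Y.
    by apply/subsetP => w /set2P[]->; rewrite inE ?uX ?uY ?vX ?vY.
  by move/subset_leq_card; rewrite cards2 nuv => /leq_trans/(_ small).
have Euv : [set u; v] = [set a; b].
  have : u \in [set a; b] by rewrite -E1 inE uX uY.
  have : v \in [set a; b] by rewrite -E1 inE vX vY.
  by move: nuv => /[swap] /set2P[]-> /[swap] /set2P[]->; rewrite ?eqxx // setUC.
have : [set u; v] \in X :&: Y by rewrite E2 Euv set11.
rewrite inE => /andP[uvX uvY]; split => // w wX wY.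
by apply/set2P; rewrite Euv -E1 inE wX wY.
Qed.

Lemma disk_deg2 X a b c d : X \in D -> [set a; b] \in X -> [set a; c] \in X ->
  [set a; d] \in X -> [|| b == c, b == d | c == d].
Proof.
move=> /disk_cycle [s [us _ _ ->]].
have nbr z : [set a; z] \in cycle_edges s -> z = next s a \/ z = prev s a.
  case/imsetP=> y ys /eq_set2 [[-> ->]|[-> ->]]; first by left.
  by right; rewrite prev_next.
move=> /nbr hb /nbr hc /nbr hd.
by case: hb hc hd => -> [] -> [] ->; rewrite eqxx ?orbT.
Qed.

(* Xa and Xb both pass through y with one edge to {o, o'} and one to r, so both
   satisfy (S1)'s splitting condition while sharing r besides y: (S2) fails. *)
Lemma nonconforming_split y o o' r z Xa Xb : Xa \in D -> Xb \in D ->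
  [set y; o] \in Xa -> [set y; r] \in Xa -> [set y; o'] \in Xb -> [set y; r] \in Xb ->
  uniq [:: y; o; o'; r] -> eG y z -> z \notin [:: y; o; o'; r] ->
  2 <= #|[set u | eG y u] :\: [set o; o']| /\ ~ conforming eG D y [set o; o'].
Proof.
move=> XaD XbD yoXa yrXa yoXb yrXb U eyz zn.
move: U zn; rewrite /= !inE !negb_or.
move=> /and4P[/and3P[yo yo' yr] /andP[oo' or_] o'r _] /and4P[_ zo zo' zr].
have eyr := disk_edge_rel XaD yrXa.
have rN : r \notin [set o; o'] by rewrite !inE negb_or eq_sym or_ eq_sym o'r.
split.
  have sub : [set r; z] \subset [set u | eG y u] :\: [set o; o'].
    apply/subsetP => w /set2P[]->; rewrite inE [_ \in [set _ | _]]inE ?eyr ?eyz andbT //.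
    by rewrite !inE negb_or zo zo'.
  by apply: leq_trans (subset_leq_card sub); rewrite cards2 eq_sym zr.
have nXab : Xa != Xb.
  apply: contraNneq oo' => E; rewrite -E in yoXb.
  by have := disk_deg2 XaD yoXa yoXb yrXa; rewrite (negbTE or_) (negbTE o'r) !orbF.
have splitting X u : X \in D -> [set y; u] \in X -> u \in [set o; o'] ->
    [set y; r] \in X -> X \in [set C in D | (y \in cverts C) && splits eG y [set o; o'] C].
  move=> XD yuX uN yrX; rewrite inE XD (cverts_edgel yuX) /splits /=.
  by apply/andP; split; apply/existsP; [exists u; rewrite yuX | exists r; rewrite yrX eyr].
have XaS := splitting _ _ XaD yoXa (set21 _ _) yrXa.
have XbS := splitting _ _ XbD yoXb (set22 _ _) yrXb.
move=> [D1 [D2 [_ [E Ecap]]]].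
have : r \in cverts Xa :&: cverts Xb by rewrite inE (cverts_edger yrXa) (cverts_edger yrXb).
suff -> : cverts Xa :&: cverts Xb = [set y] by move/set1P => ry; rewrite ry eqxx in yr.
by move: XaS XbS nXab; rewrite E => /set2P[]-> /set2P[]->; rewrite ?eqxx // setIC.
Qed.

End WeakDiskSystem.

(** * Case analysis on the sites of the triad ends *)

Lemma perm_swap12 (T : eqType) (a b : T) s : perm_eq [:: a, b & s] [:: b, a & s].
Proof. exact: permEl (perm_catCA [:: a] [:: b] s). Qed.

Lemma perm_swap23 (T : eqType) (a b c : T) s : perm_eq [:: a, b, c & s] [:: a, c, b & s].
Proof. by rewrite perm_cons perm_swap12. Qed.

(* The place of a vertex of S relative to G: the branch vertex of [u], or an
   inner vertex of the segment of the edge [uv]. *)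
Inductive site (T : Type) := Vtx of T | Seg of T & T.
Arguments Vtx {T}. Arguments Seg {T}.

Section TriadCases.
Variables (TG : finType) (eG : rel TG) (D : {set {set {set TG}}}).
Implicit Types (X Y A B C : {set {set TG}}) (p : site TG).
Hypothesis seG : symmetric eG.
Hypothesis irG : irreflexive eG.
Hypothesis wd : weak_disk_system eG D.
Hypothesis conn : forall x y, connect eG x y.
Hypothesis card5 : 5 <= #|TG|.

Definition site_ok p := if p is Seg u v then eG u v else true.

Definition site_in X p :=
  match p with Vtx u => u \in cverts X | Seg u v => [set u; v] \in X end.

Definition site_ends p : seq TG :=
  match p with Vtx u => [:: u] | Seg u v => [:: u; v] end.

Definition end_choice p1 p2 p3 (cs : seq TG) := exists c1 c2 c3,
  perm_eq cs [:: c1; c2; c3] /\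
  [&& c1 \in site_ends p1, c2 \in site_ends p2, c3 \in site_ends p3
    & uniq [:: c1; c2; c3]].

Definition in_one_disk c1 c2 c3 :=
  [exists C in D, [&& c1 \in cverts C, c2 \in cverts C & c3 \in cverts C]].

Definition outcome p1 p2 p3 := exists c1 c2 c3,
  end_choice p1 p2 p3 [:: c1; c2; c3] /\
  (~~ in_one_disk c1 c2 c3 \/
   [/\ eG c1 c2, eG c1 c3, 2 <= #|[set u | eG c1 u] :\: [set c2; c3]|
     & ~ conforming eG D c1 [set c2; c3]]).

(* [p_i] is the site of the triad end [x_i]; the disks [A], [B], [C] pass
   through the pairs [x1 x2], [x1 x3], [x2 x3] and avoid the third end. *)
Inductive triad_config p1 p2 p3 A B C : Prop := TriadConfig of
  site_ok p1 & site_ok p2 & site_ok p3 & A \in D & B \in D & C \in D &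
  site_in A p1 & site_in A p2 & ~~ site_in A p3 &
  site_in B p1 & ~~ site_in B p2 & site_in B p3 &
  ~~ site_in C p1 & site_in C p2 & site_in C p3 &
  forall X, X \in D -> ~~ [&& site_in X p1, site_in X p2 & site_in X p3].

Lemma end_choiceI p1 p2 p3 c1 c2 c3 :
  [&& c1 \in site_ends p1, c2 \in site_ends p2, c3 \in site_ends p3
    & uniq [:: c1; c2; c3]] -> end_choice p1 p2 p3 [:: c1; c2; c3].
Proof. by exists c1, c2, c3. Qed.

Lemma end_choice_perm p1 p2 p3 cs cs' :
  end_choice p1 p2 p3 cs -> perm_eq cs cs' -> end_choice p1 p2 p3 cs'.
Proof.
move=> [c1 [c2 [c3 [pc ends]]]] pcs; exists c1, c2, c3; split => //.
by apply: perm_trans pc; rewrite perm_sym.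
Qed.

Lemma end_choice_uniq p1 p2 p3 cs : end_choice p1 p2 p3 cs -> uniq cs.
Proof. by move=> [c1 [c2 [c3 [pc /and4P[_ _ _ u]]]]]; rewrite (perm_uniq pc). Qed.

Lemma end_choice_swap12 p1 p2 p3 cs : end_choice p1 p2 p3 cs -> end_choice p2 p1 p3 cs.
Proof.
move=> [c1 [c2 [c3 [pc /and4P[h1 h2 h3 u]]]]]; exists c2, c1, c3.
have sw := perm_swap12 c1 c2 [:: c3].
by rewrite (perm_trans pc sw) -(perm_uniq sw) h1 h2 h3 u.
Qed.

Lemma end_choice_swap23 p1 p2 p3 cs : end_choice p1 p2 p3 cs -> end_choice p1 p3 p2 cs.
Proof.
move=> [c1 [c2 [c3 [pc /and4P[h1 h2 h3 u]]]]]; exists c1, c3, c2.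
have sw := perm_swap23 c1 c2 c3 [::].
by rewrite (perm_trans pc sw) -(perm_uniq sw) h1 h2 h3 u.
Qed.

Lemma end_choice_flip1 u v p2 p3 cs :
  end_choice (Seg u v) p2 p3 cs -> end_choice (Seg v u) p2 p3 cs.
Proof.
move=> [c1 [c2 [c3 [pc /and4P[h1 h2 h3 un]]]]]; exists c1, c2, c3; split => //.
by rewrite h2 h3 un /= andbT; move: h1; rewrite /= !inE orbC.
Qed.

Lemma outcome_swap12 p1 p2 p3 : outcome p2 p1 p3 -> outcome p1 p2 p3.
Proof. by case=> c1 [c2 [c3 [/end_choice_swap12 ch h]]]; exists c1, c2, c3. Qed.

Lemma outcome_swap23 p1 p2 p3 : outcome p1 p3 p2 -> outcome p1 p2 p3.
Proof. by case=> c1 [c2 [c3 [/end_choice_swap23 ch h]]]; exists c1, c2, c3. Qed.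

Lemma outcome_flip1 u v p2 p3 : outcome (Seg v u) p2 p3 -> outcome (Seg u v) p2 p3.
Proof. by case=> c1 [c2 [c3 [/end_choice_flip1 ch h]]]; exists c1, c2, c3. Qed.

Lemma outcome_flip2 u v p1 p3 : outcome p1 (Seg v u) p3 -> outcome p1 (Seg u v) p3.
Proof. by move/outcome_swap12/outcome_flip1/outcome_swap12. Qed.

Lemma outcome_flip3 u v p1 p2 : outcome p1 p2 (Seg v u) -> outcome p1 p2 (Seg u v).
Proof. by move/outcome_swap23/outcome_flip2/outcome_swap23. Qed.

Lemma config_swap12 p1 p2 p3 A B C :
  triad_config p1 p2 p3 A B C -> triad_config p2 p1 p3 A C B.
Proof. by case=> *; split => // X XD; rewrite andbCA; auto. Qed.

Lemma config_swap23 p1 p2 p3 A B C :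
  triad_config p1 p2 p3 A B C -> triad_config p1 p3 p2 B A C.
Proof. by case=> *; split => // X XD; rewrite (andbC (site_in X p3)); auto. Qed.

Lemma config_flip1 u v p2 p3 A B C :
  triad_config (Seg u v) p2 p3 A B C -> triad_config (Seg v u) p2 p3 A B C.
Proof.
have sw X : site_in X (Seg v u) = site_in X (Seg u v) by rewrite /= setUC.
case=> euv *; split; rewrite ?sw //; first by rewrite /= seG.
by move=> X XD; rewrite sw; auto.
Qed.

Lemma config_flip2 u v p1 p3 A B C :
  triad_config p1 (Seg u v) p3 A B C -> triad_config p1 (Seg v u) p3 A B C.
Proof. by move/config_swap12/config_flip1/config_swap12. Qed.

Lemma config_flip3 u v p1 p2 A B C :
  triad_config p1 p2 (Seg u v) A B C -> triad_config p1 p2 (Seg v u) A B C.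
Proof. by move/config_swap23/config_flip2/config_swap23. Qed.

Lemma outcome_unless_one_disk p1 p2 p3 c1 c2 c3 :
  end_choice p1 p2 p3 [:: c1; c2; c3] ->
  (forall X, X \in D -> c1 \in cverts X -> c2 \in cverts X -> c3 \in cverts X ->
     outcome p1 p2 p3) ->
  outcome p1 p2 p3.
Proof.
move=> ch h; case: (boolP (in_one_disk c1 c2 c3)) => [|off].
  by case/existsP => X /andP[XD /and3P[]]; apply: h.
by exists c1, c2, c3; auto.
Qed.

Lemma outcome_at_corner p1 p2 p3 y o o' r z qs Xa Xb : Xa \in D -> Xb \in D ->
  [set y; o] \in Xa -> [set y; r] \in Xa -> [set y; o'] \in Xb -> [set y; r] \in Xb ->
  perm_eq [:: y; o; o'; r] qs -> uniq qs -> eG y z -> z \notin qs ->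
  end_choice p1 p2 p3 [:: y; o; o'] -> outcome p1 p2 p3.
Proof.
move=> XaD XbD yoXa yrXa yoXb yrXb pq U eyz zn ch.
have U' : uniq [:: y; o; o'; r] by rewrite (perm_uniq pq).
have zn' : z \notin [:: y; o; o'; r] by rewrite (perm_mem pq).
have [big nc] := nonconforming_split seG wd XaD XbD yoXa yrXa yoXb yrXb U' eyz zn'.
exists y, o, o'; split => //; right; split => //.
  exact: (disk_edge_rel seG wd XaD yoXa).
exact: (disk_edge_rel seG wd XbD yoXb).
Qed.

(* Some q_i has a neighbour outside the four (G is connected with at least
   five vertices); at that corner the split is non-conforming. *)
Lemma outcome_of_K4 p1 p2 p3 q1 q2 q3 q4 X1 X2 X3 :
  X1 \in D -> X2 \in D -> X3 \in D -> uniq [:: q1; q2; q3; q4] ->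
  [set q1; q2] \in X3 -> [set q1; q4] \in X3 -> [set q2; q4] \in X3 ->
  [set q1; q3] \in X2 -> [set q1; q4] \in X2 -> [set q3; q4] \in X2 ->
  [set q2; q3] \in X1 -> [set q2; q4] \in X1 -> [set q3; q4] \in X1 ->
  end_choice p1 p2 p3 [:: q1; q2; q3] -> end_choice p1 p2 p3 [:: q4; q1; q2] ->
  outcome p1 p2 p3.
Proof.
move=> X1D X2D X3D U f12 f14 f24 g13 g14 g34 h23 h24 h34 ch123 ch412.
have [q [z [qQ zQ eqz]]] := exit_edge conn (mem_head q1 [:: q2; q3; q4]) card5.
move: qQ eqz; rewrite !inE => /or4P[]/eqP-> eqz.
- exact: outcome_at_corner X3D X2D f12 f14 g13 g14 (perm_refl _) U eqz zQ ch123.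
- have f21 : [set q2; q1] \in X3 by rewrite setUC.
  apply: (outcome_at_corner X3D X1D f21 f24 h23 h24 _ U eqz zQ).
    exact: perm_swap12.
  exact: end_choice_perm ch123 (perm_swap12 _ _ _).
- have [g31 h32] : [set q3; q1] \in X2 /\ [set q3; q2] \in X1 by rewrite !(setUC [set q3]).
  apply: (outcome_at_corner X2D X1D g31 g34 h32 h34 _ U eqz zQ).
    exact: permEl (perm_catCA [:: q3] [:: q1; q2] [:: q4]).
  exact: end_choice_perm ch123 (perm_trans (perm_swap23 _ _ _ _) (perm_swap12 _ _ _)).
- have [g41 g43] : [set q4; q1] \in X2 /\ [set q4; q3] \in X2 by rewrite !(setUC [set q4]).
  have [h42 h43] : [set q4; q2] \in X1 /\ [set q4; q3] \in X1 by rewrite !(setUC [set q4]).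
  apply: (outcome_at_corner X2D X1D g41 g43 h42 h43 _ U eqz zQ ch412).
  exact: permEl (perm_catCA [:: q4] [:: q1; q2; q3] [::]).
Qed.

Lemma edge_neq u v : eG u v -> u != v.
Proof. by apply: contraTneq => ->; rewrite irG. Qed.

Lemma outcome_VVV u1 u2 u3 A B C :
  triad_config (Vtx u1) (Vtx u2) (Vtx u3) A B C -> outcome (Vtx u1) (Vtx u2) (Vtx u3).
Proof.
case=> _ _ _ AD BD CD /= a1 a2 a3 b1 b2 b3 c1 c2 c3 none.
exists u1, u2, u3; split; last left.
  apply: end_choiceI; rewrite /= !inE !eqxx !negb_or /= andbT.
  by rewrite (memPn b2 _ b1) (memPn a3 _ a1) (memPn a3 _ a2).
by apply/existsP => -[X /andP[XD h]]; move: (none X XD); rewrite /= h.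
Qed.

Lemma outcome_SVV a b w2 w3 A B C :
  triad_config (Seg a b) (Vtx w2) (Vtx w3) A B C ->
  outcome (Seg a b) (Vtx w2) (Vtx w3).
Proof.
case=> /= eab _ _ AD BD _ abA w2A w3A abB w2B w3B _ _ _ _.
have aA := cverts_edgel abA; have bA := cverts_edger abA.
have aB := cverts_edgel abB; have bB := cverts_edger abB.
have nab := edge_neq eab; have nw23 := memPn w3A _ w2A.
have naw2 := memPn w2B _ aB; have nbw2 := memPn w2B _ bB.
have naw3 := memPn w3A _ aA; have nbw3 := memPn w3A _ bA.
have ch_a : end_choice (Seg a b) (Vtx w2) (Vtx w3) [:: a; w2; w3].
  by apply: end_choiceI; rewrite /= !inE !eqxx /= !negb_or naw2 naw3 nw23.
have ch_b : end_choice (Seg a b) (Vtx w2) (Vtx w3) [:: b; w2; w3].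
  by apply: end_choiceI; rewrite /= !inE !eqxx orbT /= !negb_or nbw2 nbw3 nw23.
apply: (outcome_unless_one_disk ch_a) => X XD aX w2X w3X.
apply: (outcome_unless_one_disk ch_b) => Y YD bY w2Y w3Y.
have nXA : X != A by apply: contraTneq w3X => ->.
have nXB : X != B by apply: contraTneq w2X => ->.
have nYA : Y != A by apply: contraTneq w3Y => ->.
have nYB : Y != B by apply: contraTneq w2Y => ->.
have [_ aw2A XA_edge] := disks_share_edge wd XD AD nXA naw2 aX w2X aA w2A.
have [_ aw3B _] := disks_share_edge wd XD BD nXB naw3 aX w3X aB w3B.
have [bw2Y bw2A _] := disks_share_edge wd YD AD nYA nbw2 bY w2Y bA w2A.
have [bw3Y bw3B _] := disks_share_edge wd YD BD nYB nbw3 bY w3Y bB w3B.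
have nXY : X != Y.
  apply/eqP => E; rewrite -E in bY.
  by case: (XA_edge b bY bA) => E'; [rewrite E' eqxx in nab|rewrite E' eqxx in nbw2].
have [_ w23Y _] := disks_share_edge wd XD YD nXY nw23 w2X w3X w2Y w3Y.
apply: (@outcome_of_K4 _ _ _ w2 w3 a b B A Y) => //; try by rewrite setUC.
- rewrite /= !inE !negb_or nw23 nab (eq_sym w2 a) (eq_sym w2 b) (eq_sym w3 a).
  by rewrite (eq_sym w3 b) naw2 nbw2 naw3 nbw3.
- exact: end_choice_perm ch_a (perm_trans (perm_swap12 _ _ _) (perm_swap23 _ _ _ _)).
Qed.


Lemma outcome_SSV_shared t a b w A B C :
  triad_config (Seg t a) (Seg t b) (Vtx w) A B C ->
  outcome (Seg t a) (Seg t b) (Vtx w).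
Proof.
case=> /= eta etb _ AD BD CD taA tbA wA taB tbB wB taC tbC wC _.
have tA := cverts_edgel taA; have aA := cverts_edger taA; have bA := cverts_edger tbA.
have tB := cverts_edgel taB; have aB := cverts_edger taB.
have tC := cverts_edgel tbC; have bC := cverts_edger tbC.
have nta := edge_neq eta; have ntb := edge_neq etb.
have nab : a != b by apply: contraNneq taC => ->.
have naw := memPn wA _ aA; have nbw := memPn wA _ bA; have ntw := memPn wA _ tA.
have ch : end_choice (Seg t a) (Seg t b) (Vtx w) [:: a; b; w].
  by apply: end_choiceI; rewrite /= !inE !eqxx !orbT /= !negb_or nab naw nbw.
apply: (outcome_unless_one_disk ch) => Y YD aY bY wY.
have nYA : Y != A by apply: contraTneq wY => ->.
have nAB : A != B by apply: contraNneq tbB => <-.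
have nAC : A != C by apply: contraNneq taC => <-.
have nBC : B != C by apply: contraNneq tbB => ->.
have [_ abA _] := disks_share_edge wd YD AD nYA nab aY bY aA bA.
have [_ _ hAB] := disks_share_edge wd AD BD nAB nta tA aA tB aB.
have [_ _ hAC] := disks_share_edge wd AD CD nAC ntb tA bA tC bC.
have [twB twC _] := disks_share_edge wd BD CD nBC ntw tB (wB : w \in cverts B) tC wC.
have nYB : Y != B.
  apply/eqP => E; rewrite E in bY.
  by case: (hAB b bA bY) => E'; [rewrite E' eqxx in ntb|rewrite E' eqxx in nab].
have nYC : Y != C.
  apply/eqP => E; rewrite E in aY.
  by case: (hAC a aA aY) => E'; [rewrite E' eqxx in nta|rewrite E' eqxx in nab].
have [_ awB _] := disks_share_edge wd YD BD nYB naw aY wY aB wB.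
have [_ bwC _] := disks_share_edge wd YD CD nYC nbw bY wY bC wC.
apply: (@outcome_of_K4 _ _ _ a w b t C A B) => //; try by rewrite setUC.
- rewrite /= !inE !negb_or naw nab (eq_sym a t) nta (eq_sym w b) nbw.
  by rewrite (eq_sym w t) ntw (eq_sym b t) ntb.
- exact: end_choice_perm ch (perm_swap23 _ _ _ _).
- apply: end_choice_perm _ (perm_swap12 _ _ _); apply: end_choiceI.
  by rewrite /= !inE !eqxx !orbT /= !negb_or (eq_sym a t) nta naw ntw.
Qed.

(* Impossible: disks through a1 a2 w and a1 b2 w would give A three edges at a1. *)
Lemma outcome_SSV_disjoint a1 b1 a2 b2 w A B C :
  triad_config (Seg a1 b1) (Seg a2 b2) (Vtx w) A B C ->
  a1 != a2 -> a1 != b2 -> b1 != a2 -> b1 != b2 -> outcome (Seg a1 b1) (Seg a2 b2) (Vtx w).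
Proof.
case=> /= e1 e2 _ AD _ _ e1A e2A wA _ _ _ _ _ _ _ n1 n2 n3 n4.
have a1A := cverts_edgel e1A; have a2A := cverts_edgel e2A; have b2A := cverts_edger e2A.
have ch1 : end_choice (Seg a1 b1) (Seg a2 b2) (Vtx w) [:: a1; a2; w].
  apply: end_choiceI; rewrite /= !inE !eqxx /= !negb_or n1 (memPn wA _ a1A).
  by rewrite (memPn wA _ a2A).
have ch2 : end_choice (Seg a1 b1) (Seg a2 b2) (Vtx w) [:: a1; b2; w].
  apply: end_choiceI; rewrite /= !inE !eqxx !orbT /= !negb_or n2 (memPn wA _ a1A).
  by rewrite (memPn wA _ b2A).
apply: (outcome_unless_one_disk ch1) => X XD x1 x2 xw.
apply: (outcome_unless_one_disk ch2) => X' XD' x1' x2' xw'.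
have nXA : X != A by apply: contraTneq xw => ->.
have nXA' : X' != A by apply: contraTneq xw' => ->.
have [_ h1 _] := disks_share_edge wd XD AD nXA n1 x1 x2 a1A a2A.
have [_ h2 _] := disks_share_edge wd XD' AD nXA' n2 x1' x2' a1A b2A.
have := disk_deg2 wd AD e1A h1 h2.
by rewrite (negbTE n3) (negbTE n4) (negbTE (edge_neq e2)).
Qed.

Lemma outcome_SSV a1 b1 a2 b2 w A B C :
  triad_config (Seg a1 b1) (Seg a2 b2) (Vtx w) A B C ->
  outcome (Seg a1 b1) (Seg a2 b2) (Vtx w).
Proof.
move=> cf.
case: (eqVneq a1 a2) => [E|n1]; first by subst; exact: outcome_SSV_shared cf.
case: (eqVneq a1 b2) => [E|n2].
  by subst; apply: outcome_flip2; apply: outcome_SSV_shared; exact: (config_flip2 cf).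
case: (eqVneq b1 a2) => [E|n3].
  by subst; apply: outcome_flip1; apply: outcome_SSV_shared; exact: (config_flip1 cf).
case: (eqVneq b1 b2) => [E|n4].
  subst; apply: outcome_flip1; apply: outcome_flip2; apply: outcome_SSV_shared.
  exact: (config_flip2 (config_flip1 cf)).
exact: (outcome_SSV_disjoint cf n1 n2 n3 n4).
Qed.


Lemma outcome_SSS_star t a b c A B C :
  triad_config (Seg t a) (Seg t b) (Seg t c) A B C ->
  outcome (Seg t a) (Seg t b) (Seg t c).
Proof.
case=> /= eta etb etc AD BD CD taA tbA tcA taB tbB tcB taC tbC tcC _.
have tA := cverts_edgel taA; have aA := cverts_edger taA; have bA := cverts_edger tbA.
have tB := cverts_edgel taB; have aB := cverts_edger taB; have cB := cverts_edger tcB.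
have tC := cverts_edgel tbC; have bC := cverts_edger tbC; have cC := cverts_edger tcC.
have nta := edge_neq eta; have ntb := edge_neq etb; have ntc := edge_neq etc.
have nab : a != b by apply: contraNneq taC => ->.
have nac : a != c by apply: contraNneq tcA => <-.
have nbc : b != c by apply: contraNneq tbB => ->.
have nAB : A != B by apply: contraNneq tbB => <-.
have nAC : A != C by apply: contraNneq taC => <-.
have [_ _ hAB] := disks_share_edge wd AD BD nAB nta tA aA tB aB.
have [_ _ hAC] := disks_share_edge wd AD CD nAC ntb tA bA tC bC.
have ch : end_choice (Seg t a) (Seg t b) (Seg t c) [:: a; b; c].
  by apply: end_choiceI; rewrite /= !inE !eqxx !orbT /= !negb_or nab nac nbc.
apply: (outcome_unless_one_disk ch) => Y YD aY bY cY.
have nYA : Y != A.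
  apply/eqP => E; rewrite E in cY.
  by case: (hAC c cY cC) => E'; [rewrite E' eqxx in ntc|rewrite E' eqxx in nbc].
have nYB : Y != B.
  apply/eqP => E; rewrite E in bY.
  by case: (hAB b bA bY) => E'; [rewrite E' eqxx in ntb|rewrite E' eqxx in nab].
have nYC : Y != C.
  apply/eqP => E; rewrite E in aY.
  by case: (hAC a aA aY) => E'; [rewrite E' eqxx in nta|rewrite E' eqxx in nab].
have [_ abA _] := disks_share_edge wd YD AD nYA nab aY bY aA bA.
have [_ acB _] := disks_share_edge wd YD BD nYB nac aY cY aB cB.
have [_ bcC _] := disks_share_edge wd YD CD nYC nbc bY cY bC cC.
apply: (@outcome_of_K4 _ _ _ b c a t B A C) => //; try by rewrite setUC.
- rewrite /= !inE !negb_or nbc (eq_sym b a) nab (eq_sym b t) ntb (eq_sym c a) nac.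
  by rewrite (eq_sym c t) ntc (eq_sym a t) nta.
- exact: end_choice_perm ch (perm_trans (perm_swap12 _ _ _) (perm_swap23 _ _ _ _)).
- apply: end_choiceI.
  by rewrite /= !inE !eqxx !orbT /= !negb_or ntb ntc nbc.
Qed.

Lemma outcome_SSS_shared12 t a b a3 b3 A B C :
  triad_config (Seg t a) (Seg t b) (Seg a3 b3) A B C ->
  outcome (Seg t a) (Seg t b) (Seg a3 b3).
Proof.
move=> cf; case: (cf) => /= _ _ e3 _ BD CD _ _ _ taB tbB e3B _ tbC e3C _.
have nBC : B != C by apply: contraNneq tbB => ->.
have [_ _ h] := disks_share_edge wd BD CD nBC (edge_neq e3)
  (cverts_edgel e3B) (cverts_edger e3B) (cverts_edgel e3C) (cverts_edger e3C).
case: (h t (cverts_edgel taB) (cverts_edgel tbC)) => E; subst.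
  exact: outcome_SSS_star cf.
by apply: outcome_flip3; apply: outcome_SSS_star; exact: (config_flip3 cf).
Qed.

Lemma outcome_SSS_adjacent a1 b1 a2 b2 a3 b3 A B C :
  triad_config (Seg a1 b1) (Seg a2 b2) (Seg a3 b3) A B C ->
  [|| a1 == a2, a1 == b2, b1 == a2 | b1 == b2] ->
  outcome (Seg a1 b1) (Seg a2 b2) (Seg a3 b3).
Proof.
move=> cf /or4P[]/eqP E; subst.
- exact: outcome_SSS_shared12 cf.
- by apply: outcome_flip2; apply: outcome_SSS_shared12; exact: (config_flip2 cf).
- by apply: outcome_flip1; apply: outcome_SSS_shared12; exact: (config_flip1 cf).
- apply: outcome_flip1; apply: outcome_flip2; apply: outcome_SSS_shared12.
  exact: (config_flip2 (config_flip1 cf)).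
Qed.

(* Impossible, as in [outcome_SSV_disjoint]. *)
Lemma outcome_SSS_disjoint a1 b1 a2 b2 a3 b3 A B C :
  triad_config (Seg a1 b1) (Seg a2 b2) (Seg a3 b3) A B C ->
  ~~ [|| a1 == a2, a1 == b2, b1 == a2 | b1 == b2] ->
  ~~ [|| a1 == a3, a1 == b3, b1 == a3 | b1 == b3] ->
  ~~ [|| a2 == a3, a2 == b3, b2 == a3 | b2 == b3] ->
  outcome (Seg a1 b1) (Seg a2 b2) (Seg a3 b3).
Proof.
case=> /= _ e2 _ AD _ CD e1A e2A _ _ _ _ e1C e2C e3C _.
rewrite !negb_or => /and4P[n1 n2 n3 n4] /and4P[m1 _ _ _] /and4P[k1 _ k3 _].
have a1A := cverts_edgel e1A; have a2A := cverts_edgel e2A; have b2A := cverts_edger e2A.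
have a3C := cverts_edgel e3C.
have nAC : A != C by apply: contraNneq e1C => <-.
have [_ _ hAC] := disks_share_edge wd AD CD nAC (edge_neq e2) a2A b2A
  (cverts_edgel e2C) (cverts_edger e2C).
have a3A : a3 \notin cverts A.
  apply/negP => h; case: (hAC a3 h a3C) => E.
    by rewrite E eqxx in k1.
  by rewrite E eqxx in k3.
have ch1 : end_choice (Seg a1 b1) (Seg a2 b2) (Seg a3 b3) [:: a1; a2; a3].
  apply: end_choiceI; rewrite /= !inE !eqxx /= !negb_or n1 m1 andbT /=.
  by rewrite (memPn a3A _ a2A).
have ch2 : end_choice (Seg a1 b1) (Seg a2 b2) (Seg a3 b3) [:: a1; b2; a3].
  apply: end_choiceI; rewrite /= !inE !eqxx !orbT /= !negb_or n2 m1 /=.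
  by rewrite (memPn a3A _ b2A).
apply: (outcome_unless_one_disk ch1) => X XD x1 x2 x3.
apply: (outcome_unless_one_disk ch2) => X' XD' x1' x2' x3'.
have nXA : X != A by apply: contraTneq x3 => ->.
have nXA' : X' != A by apply: contraTneq x3' => ->.
have [_ h1 _] := disks_share_edge wd XD AD nXA n1 x1 x2 a1A a2A.
have [_ h2 _] := disks_share_edge wd XD' AD nXA' n2 x1' x2' a1A b2A.
have := disk_deg2 wd AD e1A h1 h2.
by rewrite (negbTE n3) (negbTE n4) (negbTE (edge_neq e2)).
Qed.

Lemma outcome_SSS a1 b1 a2 b2 a3 b3 A B C :
  triad_config (Seg a1 b1) (Seg a2 b2) (Seg a3 b3) A B C ->
  outcome (Seg a1 b1) (Seg a2 b2) (Seg a3 b3).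
Proof.
move=> cf.
case: (boolP [|| a1 == a2, a1 == b2, b1 == a2 | b1 == b2]) => h12.
  exact: outcome_SSS_adjacent cf h12.
case: (boolP [|| a1 == a3, a1 == b3, b1 == a3 | b1 == b3]) => h13.
  by apply: outcome_swap23; apply: outcome_SSS_adjacent h13; exact: config_swap23 cf.
case: (boolP [|| a2 == a3, a2 == b3, b2 == a3 | b2 == b3]) => h23.
  apply: outcome_swap12; apply: outcome_swap23; apply: outcome_SSS_adjacent h23.
  exact: config_swap23 (config_swap12 cf).
exact: outcome_SSS_disjoint cf h12 h13 h23.
Qed.


Lemma triad_config_outcome p1 p2 p3 A B C : triad_config p1 p2 p3 A B C -> outcome p1 p2 p3.
Proof.
case: p1 => [u1|a1 b1]; case: p2 => [u2|a2 b2]; case: p3 => [u3|a3 b3] => cf.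
- exact: outcome_VVV cf.
- exact: outcome_swap23 (outcome_swap12 (outcome_SVV (config_swap12 (config_swap23 cf)))).
- exact: outcome_swap12 (outcome_SVV (config_swap12 cf)).
- exact: outcome_swap12 (outcome_swap23 (outcome_SSV (config_swap23 (config_swap12 cf)))).
- exact: outcome_SVV cf.
- exact: outcome_swap23 (outcome_SSV (config_swap23 cf)).
- exact: outcome_SSV cf.
- exact: outcome_SSS cf.
Qed.

End TriadCases.

Section Sites.
Variables (TG TH : finType) (eG : rel TG) (eH : rel TH).
Variables (phi : TG -> TH) (Q : TG -> TG -> seq TH) (D : {set {set {set TG}}}).
Hypothesis sm : subdiv_model eG eH phi Q.
Hypothesis seG : symmetric eG.
Hypothesis wd : weak_disk_system eG D.

Definition at_site (h : TH) (p : site TG) :=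
  match p with Vtx u => h = phi u | Seg u v => eG u v /\ h \in Q u v end.

Lemma Svert_site h : Svert eG phi Q h -> exists p, at_site h p.
Proof.
case/orP => [/codomP[u ->]|/existsP[u /existsP[v /andP[e hq]]]].
  by exists (Vtx u).
by exists (Seg u v).
Qed.

Lemma at_site_ok h p : at_site h p -> site_ok eG p.
Proof. by case: p => [u|u v] //= []. Qed.

Lemma in_disk'_site h p C : at_site h p -> C \in D -> in_disk' phi Q C h = site_in C p.
Proof.
move=> pr CD; apply/idP/idP.
  case/existsP=> a /existsP[b /andP[ab]]; rewrite /segverts !inE => hs.
  have eab := disk_edge_rel seG wd CD ab.
  move: hs; case: p pr => [u ->|u v [euv hq]] /= hs.
    case/or3P: hs => [/eqP E|/eqP E|hq].
    - by rewrite (phi_inj sm E); exact: cverts_edgel ab.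
    - by rewrite (phi_inj sm E); exact: cverts_edger ab.
    - by case: (seg_phiF sm eab hq).
  case/or3P: hs => [/eqP E|/eqP E|hq'].
  - by rewrite E in hq; case: (seg_phiF sm euv hq).
  - by rewrite E in hq; case: (seg_phiF sm euv hq).
  - by rewrite -(seg_inj sm eab euv hq' hq).
case: p pr => [u ->|u v [euv hq]] /=.
  case/(cverts_disk_edge seG wd CD) => v [euv uv].
  apply/existsP; exists u; apply/existsP; exists v.
  by rewrite uv /segverts !inE eqxx.
move=> uv; apply/existsP; exists u; apply/existsP; exists v.
by rewrite uv /segverts !inE hq !orbT.
Qed.

Lemma at_site_star h p c : at_site h p -> c \in site_ends p -> in_star eG phi Q c h.
Proof.
case: p => [u ->|u v [euv hq]] /=; first by rewrite inE => /eqP->; left.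
rewrite !inE => /orP[]/eqP->; right.
  by exists v.
by exists u; [rewrite seG | rewrite (seg_rev sm euv) mem_rev].
Qed.

End Sites.

Section Triad.
Variables (TG TH : finType) (eG : rel TG) (eH : rel TH).
Variables (phi : TG -> TH) (Q : TG -> TG -> seq TH) (D : {set {set {set TG}}}).
Hypothesis sm : subdiv_model eG eH phi Q.
Hypothesis seG : symmetric eG.
Hypothesis irG : irreflexive eG.
Hypothesis seH : symmetric eH.
Hypothesis wd : weak_disk_system eG D.
Variables (x x1 x2 x3 : TH) (R1 R2 R3 : seq TH).
Hypothesis triad : S_triad eG eH phi Q D x x1 x2 x3 R1 R2 R3.

Local Notation on := (in_disk' phi Q).

Lemma S_triad_sites : exists p1 p2 p3, [/\ at_site eG phi Q x1 p1,
  at_site eG phi Q x2 p2 & at_site eG phi Q x3 p3].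
Proof.
case: triad => _ [/and3P[S1 S2 S3] _].
have [p1 r1] := Svert_site S1; have [p2 r2] := Svert_site S2.
by have [p3 r3] := Svert_site S3; exists p1, p2, p3.
Qed.

Lemma S_triad_disks : exists A B C, [/\ A \in D, B \in D & C \in D] /\
  [/\ [&& on A x1, on A x2 & ~~ on A x3], [&& on B x1, ~~ on B x2 & on B x3]
    & [&& ~~ on C x1, on C x2 & on C x3]].
Proof.
case: triad => _ [_ [_ [_ [_ [_ [_ [_ [/and3P[f12 f13 f23] noall]]]]]]]].
have nall C : C \in D -> ~~ [&& on C x1, on C x2 & on C x3].
  by move=> CD; apply: contra noall => h; apply/existsP; exists C; rewrite CD.
case/existsP: f12 => A /andP[AD /andP[A1 A2]].
case/existsP: f13 => B /andP[BD /andP[B1 B3]].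
case/existsP: f23 => C /andP[CD /andP[C2 C3]].
exists A, B, C; split=> //; rewrite A1 A2 B1 B3 C2 C3 /= !andbT.
by move: (nall A AD) (nall B BD) (nall C CD); rewrite A1 A2 B1 B3 C2 C3 !andbT.
Qed.

Variables (p1 p2 p3 : site TG).
Hypotheses (r1 : at_site eG phi Q x1 p1) (r2 : at_site eG phi Q x2 p2)
  (r3 : at_site eG phi Q x3 p3).

Let on_site C p h : at_site eG phi Q h p -> C \in D -> on C h = site_in C p.
Proof. by move=> r CD; apply: (in_disk'_site sm seG wd r CD). Qed.

Lemma S_triad_config : exists A B C, triad_config eG D p1 p2 p3 A B C.
Proof.
have [A [B [C [[AD BD CD] [/and3P[A1 A2 A3] /and3P[B1 B2 B3] /and3P[C1 C2 C3]]]]]] :=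
  S_triad_disks.
exists A, B, C; split; rewrite -?(on_site r1) -?(on_site r2) -?(on_site r3) //;
  [exact: at_site_ok r1 | exact: at_site_ok r2 | exact: at_site_ok r3 |].
case: triad => _ [_ [_ [_ [_ [_ [_ [_ [_ noall]]]]]]]] X XD.
by rewrite -(on_site r1) -?(on_site r2) -?(on_site r3) //; apply: contra noall => h;
  apply/existsP; exists X; rewrite XD.
Qed.

Lemma S_triad_rel8_minor c1 c2 c3 : end_choice p1 p2 p3 [:: c1; c2; c3] ->
  has_minor eH (rel8 eG c1 c2 c3).
Proof.
move=> [d1 [d2 [d3 [pd /and4P[h1 h2 h3 _]]]]].
apply: (has_minor_rel8_perm (perm_mem (_ : perm_eq [:: d1; d2; d3] [:: c1; c2; c3]))).
  by rewrite perm_sym.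
case: (triad) => x_S [_ [_ [/andP[P1 _] [/andP[P2 _] [/andP[P3 _] [R_S _]]]]]].
have anchor_star p : p \in [:: (x1, d1); (x2, d2); (x3, d3)] -> in_star eG phi Q p.2 p.1.
  rewrite !inE => /or3P[]/eqP->.
  - exact: (at_site_star sm seG r1 h1).
  - exact: (at_site_star sm seG r2 h2).
  - exact: (at_site_star sm seG r3 h3).
have anchor_sep p q : p \in [:: (x1, d1); (x2, d2); (x3, d3)] ->
    q \in [:: (x1, d1); (x2, d2); (x3, d3)] -> p != q -> forall d d',
    eG p.2 d -> eG q.2 d' -> p.1 \in Q p.2 d -> q.1 \in Q q.2 d' ->
    [set p.2; d] != [set q.2; d'].
  (* Ends inside one segment lie on the same disks, but [A] or [B] separates them. *)
  move=> pX qX npq d d' ed ed' hp hq; apply/negP => /eqP Es.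
  have same C : C \in D -> on C p.1 = on C q.1.
    move=> CD; rewrite (on_site (p := Seg p.2 d)) // (on_site (p := Seg q.2 d')) //=.
    by rewrite Es.
  have [A [B [_ [[AD BD _] [/and3P[A1 A2 A3] /and3P[B1 B2 _] _]]]]] := S_triad_disks.
  move: pX qX npq same; rewrite !inE => /or3P[]/eqP-> /or3P[]/eqP-> npq same;
    by [rewrite eqxx in npq | move: (same B BD); rewrite ?B1 ?(negbTE B2) |
        move: (same A AD); rewrite ?A1 ?A2 ?(negbTE A3)].
eexists; exact: (triad_minor_model sm seG irG seH x_S R_S P1 P2 P3 anchor_star anchor_sep).
Qed.

End Triad.

Unset Implicit Arguments.

Theorem lemma5p3 (TG TH : finType) (eG : rel TG) (eH : rel TH)
    (D : {set {set {set TG}}}) (phi : TG -> TH) (Q : TG -> TG -> seq TH) :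
  sgraph eG -> sgraph eH ->
  (forall x y, connect eG x y) -> 5 <= #|TG| ->
  (forall v, deg eG v != 2) ->
  weak_disk_system eG D ->
  subdiv_model eG eH phi Q ->
  has_S_triad eG eH phi Q D ->
  (exists a b, a != b /\ ~~ confluent D a b /\ has_minor eH (add_edge eG a b))
  \/ (exists (v : TG) (N1 : {set TG}),
        N1 \subset [set u | eG v u] /\ 2 <= #|N1| /\
        2 <= #|[set u | eG v u] :\: N1| /\
        ~ conforming eG D v N1 /\ has_minor eH (split_rel eG v N1))
  \/ (exists x1 x2 x3 : TG, uniq [:: x1; x2; x3] /\
        ~~ [exists C in D, [&& x1 \in cverts C, x2 \in cverts C & x3 \in cverts C]] /\
        has_minor eH (rel8 eG x1 x2 x3))
  \/ (exists x y u : TG, eG x y /\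
        ~~ [exists C in D, ([set x; y] \in C) && (u \in cverts C)] /\
        has_minor eH (rel9 eG x y u)).
Proof.
(* No degree-two vertices means segments of G are edges, which [weak_disk_system]
   already presupposes. *)
move=> [seG irG] [seH _] conn card5 _ wd sm [x [x1 [x2 [x3 [R1 [R2 [R3 triad]]]]]]].
have [p1 [p2 [p3 [r1 r2 r3]]]] := S_triad_sites triad.
have [A [B [C config]]] := S_triad_config sm seG wd triad r1 r2 r3.
have minor := S_triad_rel8_minor sm seG irG seH wd triad r1 r2 r3.
have [c1 [c2 [c3 [choice [off|[e2 e3 big nonconf]]]]]] :=
  triad_config_outcome seG irG wd conn card5 config.
  right; right; left; exists c1, c2, c3.
  by split; [exact: end_choice_uniq choice | split; last exact: minor].
right; left.
have U := end_choice_uniq choice.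
exists c1, [set c2; c3]; split; first by apply/subsetP => w /set2P[]->; rewrite inE.
split; first by rewrite cards2; move: U; rewrite /= !inE => /and3P[_ ->].
by do 2!split => //; exact: has_minor_split_of_rel8 seG U (minor _ _ _ choice).
Qed.
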